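(* Let $r_1 \ge 2$ and $x_1 \ge 1$ be integers, let $d = x_1 + r_1 - 1$, and let $\mathbf{q} = (q_1,\ldots,q_d) \in \mathbb{Z}^d$ be the vector whose first $x_1$ entries equal $r_1$ and whose last $r_1 - 1$ entries equal $1 + r_1 x_1$. Let $\Delta_{(1,\mathbf{q})} = \mathrm{conv}\{\mathbf{e}_1,\ldots,\mathbf{e}_d, -\mathbf{q}\} \subset \mathbb{R}^d$. Define $\mathbf{a}'_{r_1+1} = ((-1)^{x_1}, (-x_1)^{r_1-1})$, $\mathbf{a}'_{r_1+2} = (0^{x_1}, (-1)^{r_1-1})$, $\mathbf{a}'_{r_1+3} = \mathbf{0}$, $\mathbf{a}'_i = (r_1 - i + 1)\mathbf{a}'_{r_1+1} + \mathbf{a}'_{r_1+2}$ for $1 \le i \le r_1$, and $\mathbf{b}'_j = \mathbf{e}_{d-j+1}$ for $1 \le j \le d$, and let $\mathcal{A}' = \{\mathbf{a}'_1,\ldots,\mathbf{a}'_{r_1+3},\mathbf{b}'_1,\ldots,\mathbf{b}'_d\}$. Then $\Delta_{(1,\mathbf{q})} \cap \mathbb{Z}^d = \mathcal{A}'$.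
   Context: $\mathbf{e}_i$ is the $i$-th standard basis vector of $\mathbb{R}^d$. The notation $(c_1^{y_1}, c_2^{y_2})$ denotes the vector consisting of $y_1$ copies of $c_1$ followed by $y_2$ copies of $c_2$. (These simplices are exactly the reflexive, integer-decomposition-property simplices $\Delta_{(1,\mathbf{q})}$ with $\mathbf{q}$ having two distinct parts and smallest part $r_1>1$.) *)

From HB Require Import structures.
From mathcomp Require Import all_boot all_order all_algebra.
From mathcomp Require Import reals.
Set Implicit Arguments. Unset Strict Implicit. Unset Printing Implicit Defensive.
Import Order.TTheory GRing.Theory Num.Theory.
Local Open Scope ring_scope.

Definition in_conv_hull (R : realType) (d : nat) (S : seq 'rV[R]_d) (x : 'rV[R]_d) : Prop :=
  exists lam : 'I_(size S) -> R,
    (forall i, 0 <= lam i) /\ \sum_i lam i = 1 /\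
    x = \sum_i lam i *: S`_i.

Definition dimd (r1 x1 : nat) : nat := (x1 + r1 - 1)%N.

Definition evec (d : nat) (i : 'I_d) : 'rV[int]_d := delta_mx 0 i.

Definition qvec (r1 x1 : nat) : 'rV[int]_(dimd r1 x1) :=
  \row_(i < dimd r1 x1) if (i < x1)%N then (r1%:Z) else (1 + r1 * x1)%N%:Z.

Definition simplex_vertices (r1 x1 : nat) : seq 'rV[int]_(dimd r1 x1) :=
  [seq evec i | i <- enum 'I_(dimd r1 x1)] ++ [:: - qvec r1 x1].

Definition a_r1p1 (r1 x1 : nat) : 'rV[int]_(dimd r1 x1) :=
  \row_(i < dimd r1 x1) if (i < x1)%N then -1 else - (x1%:Z).

Definition a_r1p2 (r1 x1 : nat) : 'rV[int]_(dimd r1 x1) :=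
  \row_(i < dimd r1 x1) if (i < x1)%N then 0 else -1.

Definition a_r1p3 (r1 x1 : nat) : 'rV[int]_(dimd r1 x1) := 0.

Definition a_i (r1 x1 i : nat) : 'rV[int]_(dimd r1 x1) :=
  ((r1 - i + 1)%N%:Z) *: a_r1p1 r1 x1 + a_r1p2 r1 x1.

(* b'_j = e_{d-j+1} (1-based), i.e. 0-based index d - j, for 1 <= j <= d *)
Definition b_j (r1 x1 j : nat) : 'rV[int]_(dimd r1 x1) :=
  \row_(k < dimd r1 x1) if (nat_of_ord k == dimd r1 x1 - j)%N then 1 else 0.

Definition Aprime (r1 x1 : nat) : seq 'rV[int]_(dimd r1 x1) :=
  [seq a_i r1 x1 i | i <- iota 1 r1] ++
  [:: a_r1p1 r1 x1; a_r1p2 r1 x1; a_r1p3 r1 x1] ++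
  [seq b_j r1 x1 j | j <- iota 1 (dimd r1 x1)].

Definition toR (R : realType) (d : nat) (z : 'rV[int]_d) : 'rV[R]_d :=
  map_mx (fun t : int => t%:~R) z.

From mathcomp Require Import all_boot all_order all_algebra.
From mathcomp Require Import reals.
From mathcomp Require Import zify ring.
Set Implicit Arguments. Unset Strict Implicit. Unset Printing Implicit Defensive.
Import Order.TTheory GRing.Theory Num.Theory.
Local Open Scope ring_scope.

(* Put N = 1 + q_1 + ... + q_d = r1 (1 + r1 x1).  A point x lies in the simplex
   iff its barycentric coordinates t/N, with t = 1 - sum_k x_k, at the vertex -q
   and (N x_k + t q_k)/N at e_k are nonnegative.  For a lattice point z the
   integer t is either 0, and then z >= 0 with coordinate sum 1 is some e_k, or
   positive; then the integers N z_k + t q_k are nonnegative with sum N - t < N,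
   so z is constant on the level sets of q, i.e. z = (a^x1, b^(r1-1)), and the
   two remaining inequalities in (a, b) force r1 b + t to be 0 or 1, which
   leaves exactly the points a'_1, ..., a'_(r1+3). *)

Lemma in_conv_hull_nat (R : realType) d (S : seq 'rV[R]_d) x :
  in_conv_hull S x <-> exists g : nat -> R,
    [/\ forall i, (i < size S)%N -> 0 <= g i,
        \sum_(0 <= i < size S) g i = 1
      & x = \sum_(0 <= i < size S) g i *: S`_i].
Proof.
split.
- case=> lam [lam_ge0 [lam_sum ->]].
  exists (fun i => oapp lam 0 (insub i)); rewrite !big_mkord; split.
  + by move=> i _; case: insubP => [j _ _ /=|_ /=]; rewrite ?lam_ge0.
  + by rewrite -lam_sum; apply: eq_bigr => j _; rewrite valK.
  + by apply: eq_bigr => j _; rewrite valK.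
- case=> g [g_ge0]; rewrite !big_mkord => g_sum ->.
  by exists (fun i => g i); split=> // i; apply: g_ge0.
Qed.

Section SimplexHull.
Variables (R : realType) (d : nat) (q : 'rV[R]_d).
Local Notation S := ([seq delta_mx 0 i | i <- enum 'I_d] ++ [:: - q]).

Lemma size_simplex : size S = d.+1.
Proof. by rewrite size_cat size_map size_enum_ord addn1. Qed.

Lemma simplex_entry i k :
  S`_i 0 k = if (i < d)%N then (i == k)%:R else if i == d then - q 0 k else 0.
Proof.
have [i_gt_d | i_le_d] := ltnP d i.
  by rewrite nth_default ?size_simplex // mxE ltnNge ltnW //= gtn_eqF.
rewrite nth_cat size_map size_enum_ord; case: ltnP => [i_lt_d | i_ge_d].
  by rewrite (nth_map k) ?size_enum_ord // mxE eqxx -(inj_eq val_inj) /= nth_enum_ord // eq_sym.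
have -> : i = d by apply/eqP; rewrite eqn_leq i_le_d.
by rewrite subnn eqxx mxE.
Qed.

Lemma sum_simplex_entry (g : nat -> R) k :
  \sum_(0 <= i < d.+1) g i * S`_i 0 k = g k - g d * q 0 k.
Proof.
rewrite big_nat_recr //= simplex_entry ltnn eqxx mulrN; congr (_ - _).
rewrite big_mkord (bigD1 k) //= simplex_entry ltn_ord eqxx mulr1.
rewrite big1 ?addr0 // => i ik; rewrite simplex_entry ltn_ord.
by rewrite (inj_eq val_inj) (negbTE ik) mulr0.
Qed.

Lemma in_conv_hull_simplexP x : 0 < 1 + \sum_k q 0 k ->
  in_conv_hull S x <->
  0 <= 1 - \sum_k x 0 k /\
  forall k, 0 <= (1 + \sum_i q 0 i) * x 0 k + (1 - \sum_i x 0 i) * q 0 k.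
Proof.
move=> N_gt0; rewrite in_conv_hull_nat size_simplex.
set N := 1 + \sum_i q 0 i in N_gt0 *; set t := 1 - \sum_i x 0 i.
have N_neq0 : N != 0 by rewrite gt_eqF.
have entry_sum (g : nat -> R) k :
    (\sum_(0 <= i < d.+1) g i *: S`_i) 0 k = g k - g d * q 0 k.
  by rewrite summxE -sum_simplex_entry; apply: eq_bigr => i _; rewrite mxE.
split.
- case=> g [g_ge0 g_sum x_def].
  have xE k : x 0 k = g k - g d * q 0 k by rewrite x_def entry_sum.
  have tE : t = g d * N.
    have sum_g : \sum_(i < d) g i = 1 - g d.
      by rewrite -g_sum big_nat_recr //= big_mkord addrK.
    rewrite /t /N; under eq_bigr do rewrite xE.
    by rewrite sumrB -mulr_sumr sum_g; ring.
  split; first by rewrite tE mulr_ge0 ?g_ge0 // ltW.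
  move=> k; rewrite tE xE.
  rewrite [X in 0 <= X](_ : _ = N * g k); last by ring.
  by apply: mulr_ge0; [exact: ltW | apply: g_ge0; rewrite ltnS ltnW].
- case=> t_ge0 bary_ge0; pose lam := t / N.
  pose g i := oapp (fun k => x 0 k + lam * q 0 k) lam (insub i).
  have gE (k : 'I_d) : g k = x 0 k + lam * q 0 k by rewrite /g valK.
  have gd : g d = lam by rewrite /g insubF ?ltnn.
  exists g; split.
  + move=> i _; rewrite /g; case: insubP => [k _ _ /=|_ /=].
      rewrite (_ : _ + _ = (N * x 0 k + t * q 0 k) / N); last by rewrite /lam; field.
      by apply: divr_ge0; [exact: bary_ge0 | exact: ltW].
    by apply: divr_ge0; [exact: t_ge0 | exact: ltW].
  + rewrite big_nat_recr //= big_mkord; under eq_bigr do rewrite gE.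
    have sum_q : \sum_i q 0 i = N - 1 by rewrite /N; ring.
    have sum_x : \sum_i x 0 i = 1 - t by rewrite /t; ring.
    by rewrite big_split /= -mulr_sumr gd sum_q sum_x /lam; field.
  + by apply/rowP => k; rewrite entry_sum gE gd addrK.
Qed.

End SimplexHull.

(* With N = 1 + sum_i q_i and t = 1 - sum_i x_i, the numbers t and N x_k + t q_k
   are N times the barycentric coordinates of x at the vertices -q and e_k. *)
Definition simplex_ineqs d (q x : 'rV[int]_d) : Prop :=
  0 <= 1 - \sum_k x 0 k /\
  forall k, 0 <= (1 + \sum_i q 0 i) * x 0 k + (1 - \sum_i x 0 i) * q 0 k.

Lemma sum_toR (R : realType) d (v : 'rV[int]_d) :
  \sum_k toR R v 0 k = (\sum_k v 0 k)%:~R.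
Proof. by rewrite rmorph_sum; apply: eq_bigr => k _; rewrite mxE. Qed.

Lemma in_conv_hull_lattice_simplexP (R : realType) d (q z : 'rV[int]_d) :
  0 < 1 + \sum_k q 0 k ->
  in_conv_hull (map (@toR R d) ([seq evec i | i <- enum 'I_d] ++ [:: - q])) (toR R z)
  <-> simplex_ineqs q z.
Proof.
move=> N_gt0.
have -> : map (@toR R d) ([seq evec i | i <- enum 'I_d] ++ [:: - q])
          = [seq delta_mx 0 i | i <- enum 'I_d] ++ [:: - toR R q].
  rewrite map_cat -map_comp; congr (_ ++ [:: _]).
    by apply: eq_map => i /=; rewrite /toR map_delta_mx.
  by apply/rowP => k; rewrite !mxE intrN.
rewrite in_conv_hull_simplexP; last by rewrite sum_toR -[1](mulr1z) -intrD ltr0z.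
have t_cast : (0 <= 1 - \sum_k toR R z 0 k) = (0 <= 1 - \sum_k z 0 k).
  by rewrite sum_toR -(ler0z R) intrD intrN mulr1z.
have bary_cast k :
  (0 <= (1 + \sum_i toR R q 0 i) * toR R z 0 k + (1 - \sum_i toR R z 0 i) * toR R q 0 k)
  = (0 <= (1 + \sum_i q 0 i) * z 0 k + (1 - \sum_i z 0 i) * q 0 k).
  by rewrite !sum_toR !mxE -(ler0z R) !(intrD, intrN, intrM, mulr1z).
rewrite /simplex_ineqs t_cast.
by split=> -[t_ge0 bary_ge0]; split=> // k; [rewrite -bary_cast | rewrite bary_cast].
Qed.

Lemma ge0_sum1_delta_mx d (z : 'rV[int]_d) :
  (forall k, 0 <= z 0 k) -> \sum_k z 0 k = 1 -> exists k, z = delta_mx 0 k.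
Proof.
move=> z_ge0 z_sum.
have [k z_k_gt0 | z_le0] := pickP (fun k => 0 < z 0 k); last first.
  by move: z_sum; rewrite big1 // => k _; apply/eqP; rewrite eq_le z_ge0 leNgt z_le0.
move: z_sum; rewrite (bigD1 k) //=; set rest := \sum_(i | _) _ => z_sum.
have [z_k rest_eq0] : z 0 k = 1 /\ rest = 0.
  have : 0 <= rest by apply: sumr_ge0.
  lia.
exists k; apply/rowP => i; rewrite mxE eqxx /=.
have [->|ik] := eqVneq i k; first by rewrite z_k.
exact: (psumr_eq0P (fun i _ => z_ge0 i) rest_eq0).
Qed.

Section LatticeSimplex.
Variables (d : nat) (q z : 'rV[int]_d).
Hypothesis N_gt0 : 0 < 1 + \sum_k q 0 k.
Hypothesis z_ineqs : simplex_ineqs q z.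

Lemma simplex_ineqs_delta_mx : \sum_k z 0 k = 1 -> exists k, z = delta_mx 0 k.
Proof.
move=> z_sum; apply: ge0_sum1_delta_mx => // k.
by have := z_ineqs.2 k; rewrite z_sum subrr mul0r addr0 pmulr_rge0.
Qed.

(* The weights w_k = N z_k + t q_k lie in [0, N - t], with t >= 1, and two of them
   with the same q_k differ by a multiple of N. *)
Lemma simplex_ineqs_eq k k' : \sum_i z 0 i != 1 -> q 0 k = q 0 k' -> z 0 k = z 0 k'.
Proof.
move=> z_sum_neq1 qkk'; have [t_ge0 w_ge0] := z_ineqs; have N_pos := N_gt0.
set N : int := 1 + \sum_i q 0 i in N_pos w_ge0; set t : int := 1 - \sum_i z 0 i in t_ge0 w_ge0.
have t_ge1 : 1 <= t by rewrite /t; lia.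
have w_sum : \sum_i (N * z 0 i + t * q 0 i) = N - t.
  by rewrite big_split /= -!mulr_sumr /N /t; ring.
have w_le j : N * z 0 j + t * q 0 j <= N - t.
  by rewrite -w_sum (bigD1 j) //= lerDl sumr_ge0.
have := w_ge0 k; have := w_ge0 k'; have := w_le k; have := w_le k'.
rewrite qkk'; nia.
Qed.

End LatticeSimplex.

Lemma block_ineqs_classify (R X a b t : int) : 2 <= R -> 1 <= X ->
  t = 1 - (X * a + (R - 1) * b) -> 1 <= t ->
  0 <= (1 + R * X) * a + t -> 0 <= R * b + t ->
  [\/ -R <= a <= 0 /\ b = X * a - 1, a = 0 /\ b = 0 | a = -1 /\ b = -X].
Proof.
move=> R_ge2 X_ge1 tE t_ge1 A_ge0 B_ge0.
(* The left summand is nonnegative and R (1 + R X) - t < 2 (R - 1) (1 + R X). *)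
have key : R * X * ((1 + R * X) * a + t) + (1 + R * X) * (R - 1) * (R * b + t)
           = R * (1 + R * X) - t by rewrite tE; ring.
have B_le1 : R * b + t <= 1.
  have : 0 <= R * X * ((1 + R * X) * a + t) by rewrite mulr_ge0 //; nia.
  have : 0 <= (1 + R * X) * (R - 2) by nia.
  nia.
have [B0 | B1] : R * b + t = 0 \/ R * b + t = 1 by lia.
- have bE : b = X * a - 1 by nia.
  by constructor 1; split; [apply/andP; split|]; nia.
- have bE : b = X * a by nia.
  have [a0 | a1] : a = 0 \/ a = -1 by nia.
  + by constructor 2; split; nia.
  + by constructor 3; split; nia.
Qed.

Section Delta1q.
Variables r1 x1 : nat.
Hypotheses (r1_ge2 : (2 <= r1)%N) (x1_ge1 : (1 <= x1)%N).
Local Notation d := (dimd r1 x1).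

Definition blockrow (a b : int) : 'rV[int]_d :=
  \row_(k < d) if (k < x1)%N then a else b.

Lemma sum_blockrow a b : \sum_k blockrow a b 0 k = x1%:Z * a + (r1%:Z - 1) * b.
Proof.
under eq_bigr do rewrite mxE.
rewrite -(big_mkord xpredT (fun k => if (k < x1)%N then a else b)).
rewrite (big_cat_nat (n := x1)) //=; last by rewrite /dimd; lia.
rewrite (eq_big_nat (m := 0) (n := x1) _ _ (F2 := fun _ => a)); last by move=> i /andP[_ ->].
rewrite (eq_big_nat (m := x1) (n := d) _ _ (F2 := fun _ => b)); last first.
  by move=> i /andP[]; rewrite leqNgt => /negbTE ->.
rewrite !sumr_const_nat -[a *+ _]mulr_natl -[b *+ _]mulr_natl !natz /dimd; nia.
Qed.

Lemma qvec_blockrow : qvec r1 x1 = blockrow r1%:Z (1 + r1%:Z * x1%:Z).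
Proof. by apply/rowP => k; rewrite !mxE; case: ifP => _; lia. Qed.

Lemma one_add_sum_qvec : 1 + \sum_k qvec r1 x1 0 k = r1%:Z * (1 + r1%:Z * x1%:Z).
Proof. by rewrite qvec_blockrow sum_blockrow; ring. Qed.

Lemma blockrow_of_qvec_levels (z : 'rV[int]_d) :
  (forall k k', qvec r1 x1 0 k = qvec r1 x1 0 k' -> z 0 k = z 0 k') ->
  exists a b, z = blockrow a b.
Proof.
move=> z_levels.
have first_block : (0 < d)%N by rewrite /dimd; lia.
have second_block : (x1 < d)%N by rewrite /dimd; lia.
exists (z 0 (Ordinal first_block)), (z 0 (Ordinal second_block)).
apply/rowP => k; rewrite mxE.
by case: ifP => k_block; apply: z_levels; rewrite !mxE /= k_block ?ltnn ?x1_ge1.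
Qed.

Lemma simplex_ineqs_blockrowP a b (t := 1 - (x1%:Z * a + (r1%:Z - 1) * b)) :
  simplex_ineqs (qvec r1 x1) (blockrow a b) <->
  [/\ 0 <= t, 0 <= (1 + r1%:Z * x1%:Z) * a + t & 0 <= r1%:Z * b + t].
Proof.
rewrite /simplex_ineqs one_add_sum_qvec sum_blockrow -/t qvec_blockrow.
have first_block : (0 < d)%N by rewrite /dimd; lia.
have second_block : (x1 < d)%N by rewrite /dimd; lia.
have r1_gt0 : 0 < r1%:Z by lia.
have M_gt0 : 0 < 1 + r1%:Z * x1%:Z by nia.
have wA : r1%:Z * (1 + r1%:Z * x1%:Z) * a + t * r1%:Z = r1%:Z * ((1 + r1%:Z * x1%:Z) * a + t).
  by ring.
have wB : r1%:Z * (1 + r1%:Z * x1%:Z) * b + t * (1 + r1%:Z * x1%:Z)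
          = (1 + r1%:Z * x1%:Z) * (r1%:Z * b + t) by ring.
split=> [[t_ge0 w_ge0] | [t_ge0 A_ge0 B_ge0]].
- have := w_ge0 (Ordinal first_block); have := w_ge0 (Ordinal second_block).
  by rewrite !mxE /= ltnn x1_ge1 wA wB (pmulr_rge0 _ r1_gt0) (pmulr_rge0 _ M_gt0).
- split=> // k; rewrite !mxE; case: ifP => _.
  + by rewrite wA (pmulr_rge0 _ r1_gt0).
  + by rewrite wB (pmulr_rge0 _ M_gt0).
Qed.

(* The second alternative is a'_(r1-k+1) for k >= 1 and a'_(r1+2) for k = 0; the
   last two are a'_(r1+3) and a'_(r1+1). *)
Definition Aprime_shape (z : 'rV[int]_d) : Prop :=
  [\/ exists k : 'I_d, z = delta_mx 0 k,
      exists2 k : nat, (k <= r1)%N & z = blockrow (- k%:Z) (- (k%:Z * x1%:Z) - 1),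
      z = blockrow 0 0
    | z = blockrow (-1) (- x1%:Z)].

Lemma simplex_ineqs_qvecP z : simplex_ineqs (qvec r1 x1) z <-> Aprime_shape z.
Proof.
have N_gt0 : 0 < 1 + \sum_k qvec r1 x1 0 k by rewrite one_add_sum_qvec; nia.
split=> [z_ineqs | ].
- have [z_sum1 | z_sum_neq1] := eqVneq (\sum_k z 0 k) 1.
    by have [k ->] := simplex_ineqs_delta_mx N_gt0 z_ineqs z_sum1; constructor 1; exists k.
  have t_ge1 : 1 <= 1 - \sum_k z 0 k by case: z_ineqs; lia.
  have [a [b zE]] := blockrow_of_qvec_levels (fun k k' => simplex_ineqs_eq N_gt0 z_ineqs z_sum_neq1).
  move: z_ineqs t_ge1; rewrite zE simplex_ineqs_blockrowP sum_blockrow => -[_ A_ge0 B_ge0] t_ge1.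
  have r1_ge2Z : 2 <= r1%:Z by lia.
  have x1_ge1Z : 1 <= x1%:Z by lia.
  case: (block_ineqs_classify r1_ge2Z x1_ge1Z erefl t_ge1 A_ge0 B_ge0).
  + move=> [/andP[a_ge a_le] ->]; constructor 2; exists `|a|%N; first by lia.
    by congr blockrow; lia.
  + by move=> [-> ->]; constructor 3.
  + by move=> [-> ->]; constructor 4.
- case=> [[k ->] | [k k_le ->] | -> | ->];
    [ | by apply/simplex_ineqs_blockrowP; split; nia ..].
  have sum_delta : \sum_i (delta_mx 0 k : 'rV[int]_d) 0 i = 1.
    rewrite (bigD1 k) //= mxE !eqxx big1 ?addr0 // => i ik.
    by rewrite mxE (negbTE ik) andbF.
  split=> [|i]; first by rewrite sum_delta subrr.
  rewrite sum_delta subrr mul0r addr0 mxE.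
  by apply: mulr_ge0; [exact: ltW | case: (_ && _)].
Qed.

Lemma a_i_blockrow i :
  a_i r1 x1 i = blockrow (- (r1 - i + 1)%N%:Z) (- ((r1 - i + 1)%N%:Z * x1%:Z) - 1).
Proof. by apply/rowP => k; rewrite !mxE; case: (k < x1)%N => /=; lia. Qed.

Lemma mem_AprimeP z : z \in Aprime r1 x1 <-> Aprime_shape z.
Proof.
rewrite /Aprime !mem_cat !inE; split.
- case/or3P=> [/mapP[i] | /or3P[] /eqP -> | /mapP[j]].
  + rewrite mem_iota => i_range ->; constructor 2; exists (r1 - i + 1)%N; first by lia.
    exact: a_i_blockrow.
  + by constructor 4.
  + by constructor 2; exists 0%N.
  + by constructor 3; apply/rowP => k; rewrite !mxE; case: (k < x1)%N.
  + rewrite mem_iota => j_range ->; constructor 1.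
    have j_ord : (d - j < d)%N by lia.
    exists (Ordinal j_ord); apply/rowP => k; rewrite !mxE /=.
    by rewrite -[k == _]/(nat_of_ord k == (d - j)%N); case: (_ == _).
- case=> [[k ->] | [[|k] k_le ->] | -> | ->].
  + apply/or3P; constructor 3; apply/mapP; exists (d - k)%N.
      by rewrite mem_iota; have := ltn_ord k; lia.
    apply/rowP => i; rewrite !mxE subKn ?(ltnW (ltn_ord k)) //=.
    by rewrite -[i == k]/(nat_of_ord i == k); case: (_ == _).
  + apply/or3P; constructor 2; apply/or3P; constructor 2.
    by apply/eqP/rowP => i; rewrite !mxE; case: (i < x1)%N.
  + apply/or3P; constructor 1; apply/mapP; exists (r1 - k)%N; first by rewrite mem_iota; lia.
    by rewrite a_i_blockrow (_ : (r1 - (r1 - k) + 1)%N = k.+1) //; lia.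
  + apply/or3P; constructor 2; apply/or3P; constructor 3.
    by apply/eqP/rowP => i; rewrite !mxE; case: (i < x1)%N.
  + by apply/or3P; constructor 2; apply/or3P; constructor 1.
Qed.

End Delta1q.

Theorem theorem1p4 (R : realType) (r1 x1 : nat) :
  (2 <= r1)%N -> (1 <= x1)%N ->
  forall z : 'rV[int]_(dimd r1 x1),
    in_conv_hull (map (@toR R _) (simplex_vertices r1 x1)) (toR R z)
    <-> z \in Aprime r1 x1.
Proof.
move=> r1_ge2 x1_ge1 z.
have N_gt0 : 0 < 1 + \sum_k qvec r1 x1 0 k by rewrite one_add_sum_qvec //; nia.
rewrite in_conv_hull_lattice_simplexP // simplex_ineqs_qvecP // mem_AprimeP //.
Qed.
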